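(* Let $R$ be a commutative hyperring with no zero divisors (i.e. $xy=0$ implies $x=0$ or $y=0$). If $I$ is a relational subhyperring of $R$ such that $xy\in I$ for all $x\in R$ and $y\in I$, then $I$ is a hyperideal of $R$.
   Context: A canonical hypergroup is a triple $(H,+,0)$ where $H\neq\emptyset$, $+$ assigns to each $(x,y)\in H\times H$ a subset $x+y\subseteq H$ (for $A,B\subseteq H$ put $A+B:=\bigcup_{a\in A,b\in B}a+b$, $x+A:=\{x\}+A$), and $0\in H$, such that for all $x,y,z\in H$: $(x+y)+z=x+(y+z)$; $x+y=y+x$; there is a unique $-x\in H$ with $0\in x+(-x)$; and $z\in x+y$ implies $y\in z+(-x)$. Write $x-y:=x+(-y)$. A (commutative) hyperring is $(R,+,\cdot,0)$ with $(R,+,0)$ a canonical hypergroup, $(R,\cdot)$ a commutative semigroup with $0x=0$ for all $x$, and $x(y+z)=xy+xz$ for all $x,y,z$ (where $xA:=\{xa:a\in A\}$). A relational subhyperring of $R$ is a multiplicatively closed subset $S\subseteq R$ such that, with the induced operation $x+_Sy:=(x+y)\cap S$, $(S,+_S,\cdot,0)$ is a hyperring. A (traditional) subhyperring is a subset $S$ with $0\in S$ and $x-y\subseteq S$, $xy\in S$ for all $x,y\in S$. A hyperideal of $R$ is a subhyperring $I$ with $xy\in I$ for all $x\in R$, $y\in I$. *)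

(* Hyperoperations are encoded relationally:
   [add x y z] means z \in x + y.  Sets are predicates [R -> Prop].
   [hyperring_on C add mul zero] says that (C, add, mul, zero) is a
   commutative hyperring, where all quantifiers range over the carrier
   predicate C (so that both R itself, with C := fun _ => True, and a subset
   S with the induced operation are covered by the same definition). *)

Section HyperDefs.
Context {R : Type}.

Definition canonical_hypergroup_on (C : R -> Prop)
  (add : R -> R -> R -> Prop) (zero : R) : Prop :=
  C zero /\
  (forall x y z, C x -> C y -> add x y z -> C z) /\
  (forall x y z w, C x -> C y -> C z ->
     ((exists a, add x y a /\ add a z w) <-> (exists b, add y z b /\ add x b w))) /\
  (forall x y z, C x -> C y -> (add x y z <-> add y x z)) /\
  (forall x, C x -> exists y, (C y /\ add x y zero) /\
                              forall y', C y' -> add x y' zero -> y' = y) /\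
  (forall x y z nx, C x -> C y -> C z -> C nx -> add x nx zero ->
     add x y z -> add z nx y).

Definition hyperring_on (C : R -> Prop)
  (add : R -> R -> R -> Prop) (mul : R -> R -> R) (zero : R) : Prop :=
  canonical_hypergroup_on C add zero /\
  (forall x y, C x -> C y -> C (mul x y)) /\
  (forall x y z, C x -> C y -> C z -> mul (mul x y) z = mul x (mul y z)) /\
  (forall x y, C x -> C y -> mul x y = mul y x) /\
  (forall x, C x -> mul zero x = zero) /\
  (forall x y z w, C x -> C y -> C z ->
     ((exists a, add y z a /\ w = mul x a) <-> add (mul x y) (mul x z) w)).

Definition hyperring (add : R -> R -> R -> Prop) (mul : R -> R -> R) (zero : R) :=
  hyperring_on (fun _ => True) add mul zero.

Definition induced_add (add : R -> R -> R -> Prop) (S : R -> Prop) :=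
  fun x y z => add x y z /\ S z.

Definition relational_subhyperring (add : R -> R -> R -> Prop)
  (mul : R -> R -> R) (zero : R) (S : R -> Prop) : Prop :=
  (forall x y, S x -> S y -> S (mul x y)) /\
  hyperring_on S (induced_add add S) mul zero.

Definition is_neg (add : R -> R -> R -> Prop) (zero : R) (y ny : R) : Prop :=
  add y ny zero.

Definition subhyperring (add : R -> R -> R -> Prop)
  (mul : R -> R -> R) (zero : R) (S : R -> Prop) : Prop :=
  S zero /\
  (forall x y ny z, S x -> S y -> is_neg add zero y ny -> add x ny z -> S z) /\
  (forall x y, S x -> S y -> S (mul x y)).

Definition hyperideal (add : R -> R -> R -> Prop)
  (mul : R -> R -> R) (zero : R) (I : R -> Prop) : Prop :=
  subhyperring add mul zero I /\ (forall x y, I y -> I (mul x y)).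

End HyperDefs.

(* If [I] contains some [c <> 0], then for [z \in x + y] with [x, y \in I]
   the element [c z] lies in [c x + c y], which by distributivity inside [I]
   equals [c a] for some [a \in (x + y) \cap I]; cancelling [c] (no zero
   divisors) gives [z = a \in I].  Otherwise [I = {0}], and [0 + 0 = {0}]. *)

From Stdlib Require Import Classical.

Section Hyperring.

Variables (R : Type) (add : R -> R -> R -> Prop) (mul : R -> R -> R) (zero : R).
Hypothesis HR : hyperring add mul zero.

Lemma hyperring_addC x y z : add x y z -> add y x z.
Proof. destruct HR as [[_ [_ [_ [Hcom _]]]] _]. apply Hcom; exact Logic.I. Qed.

Lemma hyperring_neg_exists x : exists nx, add x nx zero.
Proof.
  destruct HR as [[_ [_ [_ [_ [Hneg _]]]]] _].
  destruct (Hneg x Logic.I) as [nx [[_ Hnx] _]]. now exists nx.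
Qed.

Lemma hyperring_neg_unique x a b : add x a zero -> add x b zero -> a = b.
Proof.
  destruct HR as [[_ [_ [_ [_ [Hneg _]]]]] _].
  intros Ha Hb. destruct (Hneg x Logic.I) as [w [_ Hw]].
  now rewrite (Hw a Logic.I Ha), (Hw b Logic.I Hb).
Qed.

Lemma hyperring_add_rev x y z nx : add x nx zero -> add x y z -> add z nx y.
Proof.
  destruct HR as [[_ [_ [_ [_ [_ Hrev]]]]] _].
  apply Hrev; exact Logic.I.
Qed.

Lemma hyperring_mulC x y : mul x y = mul y x.
Proof. destruct HR as [_ [_ [_ [Hmc _]]]]. apply Hmc; exact Logic.I. Qed.

Lemma hyperring_mul0r x : mul zero x = zero.
Proof. destruct HR as [_ [_ [_ [_ [H0 _]]]]]. apply H0; exact Logic.I. Qed.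

Lemma hyperring_mulr0 x : mul x zero = zero.
Proof. rewrite hyperring_mulC. apply hyperring_mul0r. Qed.

Lemma hyperring_mulrD x y z w :
  (exists a, add y z a /\ w = mul x a) <-> add (mul x y) (mul x z) w.
Proof. destruct HR as [_ [_ [_ [_ [_ Hdis]]]]]. apply Hdis; exact Logic.I. Qed.

Lemma hyperring_add00 z : add zero zero z -> z = zero.
Proof.
  intros Hz. destruct (hyperring_neg_exists zero) as [n0 Hn0].
  (* both [z] and [0] are negatives of [-0] *)
  apply (hyperring_neg_unique n0); apply hyperring_addC; [|exact Hn0].
  exact (hyperring_add_rev _ _ _ _ Hn0 Hz).
Qed.

Lemma hyperring_mulIr c a b :
  (forall x y, mul x y = zero -> x = zero \/ y = zero) ->
  c <> zero -> mul c a = mul c b -> a = b.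
Proof.
  intros Hdom Hc Hab. destruct (hyperring_neg_exists b) as [nb Hnb].
  assert (Hc0 : add (mul c a) (mul c nb) zero).
  { rewrite Hab. apply hyperring_mulrD. exists zero.
    now rewrite hyperring_mulr0. }
  apply hyperring_mulrD in Hc0 as [d [Hd Hcd]].
  destruct (Hdom c d (eq_sym Hcd)) as [Hc' | ->]; [contradiction|].
  apply (hyperring_neg_unique nb); now apply hyperring_addC.
Qed.

Section RelationalSubhyperring.

Variable I : R -> Prop.
Hypothesis HI : relational_subhyperring add mul zero I.

Lemma relational_subhyperring_zero : I zero.
Proof. now destruct HI as [_ [[H0 _] _]]. Qed.

Lemma relational_subhyperring_neg y ny : I y -> add y ny zero -> I ny.
Proof.
  destruct HI as [_ [[_ [_ [_ [_ [Hneg _]]]]] _]].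
  intros Hy Hny. destruct (Hneg y Hy) as [ny' [[Hny' [Hadd _]] _]].
  now rewrite (hyperring_neg_unique y ny ny' Hny Hadd).
Qed.

Lemma relational_subhyperring_mulrD c x y w :
  I c -> I x -> I y -> I w -> add (mul c x) (mul c y) w ->
  exists a, (add x y a /\ I a) /\ w = mul c a.
Proof.
  destruct HI as [_ [_ [_ [_ [_ [_ Hdis]]]]]].
  intros Hc Hx Hy Hw Hadd. apply (Hdis c x y w Hc Hx Hy). now split.
Qed.

Lemma relational_subhyperring_add_closed x y z :
  (forall x y, mul x y = zero -> x = zero \/ y = zero) ->
  (forall x y, I y -> I (mul x y)) ->
  I x -> I y -> add x y z -> I z.
Proof.
  intros Hdom Habs Hx Hy Hz.
  destruct (classic (exists c, I c /\ c <> zero)) as [[c [Hc Hc0]] | Htriv].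
  - assert (Hcz : add (mul c x) (mul c y) (mul c z))
      by (apply hyperring_mulrD; now exists z).
    assert (Icz : I (mul c z)) by (rewrite hyperring_mulC; now apply Habs).
    destruct (relational_subhyperring_mulrD c x y (mul c z) Hc Hx Hy Icz Hcz)
      as [a [[_ Ha] Hca]].
    now rewrite (hyperring_mulIr c z a Hdom Hc0 Hca).
  - assert (Hzero : forall u, I u -> u = zero)
      by (intros u Hu; apply NNPP; intro; apply Htriv; now exists u).
    rewrite (Hzero x Hx), (Hzero y Hy) in Hz.
    rewrite (hyperring_add00 z Hz). exact relational_subhyperring_zero.
Qed.

End RelationalSubhyperring.

End Hyperring.

Theorem lemma2p31 (R : Type) (add : R -> R -> R -> Prop) (mul : R -> R -> R)
  (zero : R) :
  hyperring add mul zero ->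
  (forall x y, mul x y = zero -> x = zero \/ y = zero) ->
  forall I : R -> Prop,
    relational_subhyperring add mul zero I ->
    (forall x y, I y -> I (mul x y)) ->
    hyperideal add mul zero I.
Proof.
  intros HR Hdom I HI Habs.
  split; [split; [|split] | exact Habs].
  - exact (relational_subhyperring_zero R add mul zero I HI).
  - intros x y ny z Hx Hy Hny Hz.
    apply (relational_subhyperring_add_closed R add mul zero HR I HI x ny z);
      try assumption.
    exact (relational_subhyperring_neg R add mul zero HR I HI y ny Hy Hny).
  - exact (proj1 HI).
Qed.
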